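(* Let $\eta_{i,j}(e)$ (with $i\neq j$) be a subexpression of the irredundant clique-width $k$-expression $e_G$ and let $C,N\in[0,\mathcal{N}]^{k\times q}$. Let $N_e\in[0,\mathcal{N}]^{k\times q}$ be defined by $N_e[i,a]=\min(\mathcal{N},N[i,a]+C[j,a])$ and $N_e[j,a]=\min(\mathcal{N},N[j,a]+C[i,a])$ for every color $a$, and $N_e[h,a]=N[h,a]$ for every $h\in[1,k]\setminus\{i,j\}$ and every color $a$. Then $\lambda(\eta_{i,j}(e),C,N)=\lambda(e,C,N_e)$.
   Context: Weight set: $(\mathrm{Weights},\preceq,\circledast)$ where $\preceq$ is a total order with a maximum element $\mathrm{Error}$, $\min$ is the minimum w.r.t. $\preceq$ (minimum of an empty set is $\mathrm{Error}$), and $\circledast$ is commutative, associative, has a neutral element, has absorbing element $\mathrm{Error}$, and is monotone. A color-counting 1-locally checkable problem is given by a graph $G$, colors $\mathrm{Colors}=\{a_1,\ldots,a_q\}$, nonempty lists $L_v\subseteq\mathrm{Colors}$, weights $w_{v,a}\in\mathrm{Weights}\setminus\{\mathrm{Error}\}$ ($a\in L_v$), and a function $check(v,a,n_1,\ldots,n_q)\in\{\mathrm{True},\mathrm{False}\}$. $\mathcal{N}\in[1,|V(G)|]$ is an integer with $check(v,a,n_1,\ldots,n_q)=check(v,a,\min(\mathcal{N},n_1),\ldots,\min(\mathcal{N},n_q))$ always. $[x,y]=\{x,\ldots,y\}$. $e_G$ is a clique-width $k$-expression of $G$ (operations $i(v)$, $\oplus$, $\eta_{i,j}$ joining all label-$i$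 to all label-$j$ vertices, $\rho_{i\to j}$), irredundant (whenever $\eta_{i,j}$ is applied there are no existing edges between label-$i$ and label-$j$ vertices), in which every relabeling $\rho_{i\to j}(e)$ has some vertex of $G_e$ of label $j$. For a subexpression $e$, $G_e$ is its labeled graph and $\ell_e(v)$ the label of $v$ in $G_e$. For $C,N\in[0,\mathcal{N}]^{k\times q}$ (rows = labels, columns = colors), a coloring $c$ of $G_e$ with $c(v)\in L_v$ for all $v$ is a $(C,N)$-coloring of $G_e$ if (C1) $\min(\mathcal{N},|\{v\in V(G_e): c(v)=a,\ \ell_e(v)=i\}|)=C[i,a]$ for all $i,a$; and (C2) for all $v\in V(G_e)$, $check(v,c(v),n_1,\ldots,n_q)$ holds with $n_j=\min(\mathcal{N},N[\ell_e(v),a_j]+|\{u\in N_{G_e}(v):c(u)=a_j\}|)$. $\lambda(e,C,N)$ is the minimum of $\circledast_{v\in V(G_e)}w_{v,c(v)}$ over all $(C,N)$-colorings $c$ of $G_e$ ($\mathrm{Error}$ if none). *)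

From mathcomp Require Import all_boot all_order all_algebra.
Set Implicit Arguments. Unset Strict Implicit. Unset Printing Implicit Defensive.
Import Order.TTheory.

Record is_weight_set (d : Order.disp_t) (W : orderType d)
    (Err : W) (op : W -> W -> W) (one : W) : Prop := {
  err_max : forall x : W, (x <= Err)%O;
  opC : commutative op;
  opA : associative op;
  op1 : left_id one op;
  opErr : left_zero Err op;
  op_mono : forall x y z : W, (x <= y)%O -> (op x z <= op y z)%O
}.

Inductive cwexp (k : nat) (V : Type) : Type :=
  | CVert of 'I_k & V
  | CUnion of cwexp k V & cwexp k V
  | CJoin of 'I_k & 'I_k & cwexp k V
  | CRelab of 'I_k & 'I_k & cwexp k V.

Section CliqueWidth.
Context {k : nat} {V : finType}.

Fixpoint verts (e : cwexp k V) : {set V} :=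
  match e with
  | CVert _ v => [set v]
  | CUnion e1 e2 => verts e1 :|: verts e2
  | CJoin _ _ e1 => verts e1
  | CRelab _ _ e1 => verts e1
  end.

(* label l_e(v) of a vertex v in G_e (meaningful for v \in verts e) *)
Fixpoint lab (e : cwexp k V) : V -> 'I_k :=
  match e with
  | CVert i _ => fun _ => i
  | CUnion e1 e2 => fun v => if v \in verts e1 then lab e1 v else lab e2 v
  | CJoin _ _ e1 => lab e1
  | CRelab i j e1 => fun v => if lab e1 v == i then j else lab e1 v
  end.

Fixpoint edge (e : cwexp k V) : rel V :=
  match e with
  | CVert _ _ => fun _ _ => false
  | CUnion e1 e2 => fun u w => edge e1 u w || edge e2 u w
  | CJoin i j e1 => fun u w =>
      edge e1 u w ||
      [&& u \in verts e1, w \in verts e1 &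
          ((lab e1 u == i) && (lab e1 w == j)) ||
          ((lab e1 u == j) && (lab e1 w == i))]
  | CRelab _ _ e1 => edge e1
  end.

Fixpoint cw_wf (e : cwexp k V) : Prop :=
  match e with
  | CVert _ _ => True
  | CUnion e1 e2 => [disjoint verts e1 & verts e2] /\ cw_wf e1 /\ cw_wf e2
  | CJoin i j e1 => i != j /\ cw_wf e1
  | CRelab _ _ e1 => cw_wf e1
  end.

Fixpoint subexp (f e : cwexp k V) : Prop :=
  f = e \/
  match e with
  | CVert _ _ => False
  | CUnion e1 e2 => subexp f e1 \/ subexp f e2
  | CJoin _ _ e1 => subexp f e1
  | CRelab _ _ e1 => subexp f e1
  end.

Definition expresses (G : rel V) (e : cwexp k V) : Prop :=
  cw_wf e /\ verts e = [set: V] /\ forall u w, edge e u w = G u w.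

Definition irredundant (eG : cwexp k V) : Prop :=
  forall i j e1, subexp (CJoin i j e1) eG ->
    forall u w, u \in verts e1 -> w \in verts e1 ->
      lab e1 u = i -> lab e1 w = j -> ~~ edge e1 u w.

Definition relab_target_present (eG : cwexp k V) : Prop :=
  forall i j e1, subexp (CRelab i j e1) eG ->
    exists2 v, v \in verts e1 & lab e1 v = j.

End CliqueWidth.

Section Lambda.
Context {d : Order.disp_t} {W : orderType d} (Err : W) (op : W -> W -> W) (one : W).
Context {k q : nat} {V : finType}.
Context (L : V -> {set 'I_q}) (w : V -> 'I_q -> W)
        (check : V -> 'I_q -> ('I_q -> nat) -> bool) (NN : nat).

(* c is a (C,N)-coloring of G_e (only the values of c on V(G_e) matter) *)
Definition is_CN_coloring (e : cwexp k V) (C N : 'M[nat]_(k, q))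
    (c : {ffun V -> 'I_q}) : bool :=
  [&& [forall v in verts e, c v \in L v],
      [forall i : 'I_k, forall a : 'I_q,
         minn NN #|[set v in verts e | (c v == a) && (lab e v == i)]| == C i a] &
      [forall v in verts e,
         check v (c v) (fun b => minn NN
           (N (lab e v) b + #|[set u in verts e | edge e v u && (c u == b)]|))]].

Definition coloring_weight (e : cwexp k V) (c : {ffun V -> 'I_q}) : W :=
  \big[op/one]_(v in verts e) w v (c v).

Definition lambda (e : cwexp k V) (C N : 'M[nat]_(k, q)) : W :=
  \big[Order.min/Err]_(c : {ffun V -> 'I_q} |
       is_CN_coloring e C N c) coloring_weight e c.

End Lambda.

From mathcomp Require Import all_boot all_order all_algebra.
From mathcomp Require Import zify.
From Stdlib Require Import FunctionalExtensionality.

(* The join [eta_{i,j}] gives every vertex of label [i] the vertices of label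
   [j] as new neighbours (and vice versa), and irredundance makes them disjoint
   from the old neighbours.  So a vertex of label [i] gains, in each color [b],
   exactly the [b]-colored vertices of label [j], whose number capped at [NN]
   is [C j b].  As capping at [NN] can be done before or after adding, the
   check condition of a coloring of [eta_{i,j}(e)] for [N] is the one of [e]
   for the shifted matrix [N_e], while the color counts are unchanged: both
   minima range over the same colorings. *)

Lemma card_set_or_disjoint (T : finType) (A : {set T}) (P Q : pred T) :
    (forall x, x \in A -> P x -> ~~ Q x) ->
  #|[set x in A | P x || Q x]| = #|[set x in A | P x]| + #|[set x in A | Q x]|.
Proof.
move=> PnQ; rewrite -cardsUI.
have -> : [set x in A | P x] :&: [set x in A | Q x] = set0.
  apply/setP=> x; rewrite !inE andbACA andbb.
  by case: (boolP (x \in A)) => // /PnQ; case: (P x) => // /(_ isT) /negPf ->.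
by rewrite cards0 addn0; apply: eq_card => x; rewrite !inE andb_orr.
Qed.

Lemma minn_add_capped (m n x y : nat) :
  minn m (minn m (n + minn m x) + y) = minn m (n + (y + x)).
Proof. lia. Qed.

Section CliqueWidthJoin.

Context {k q : nat} {V : finType}.

Lemma edge_sym (e : cwexp k V) : symmetric (edge e).
Proof.
elim: e => [i v|e1 IH1 e2 IH2|i j e1 IH|i j e1 IH] u w //=.
- by rewrite IH1 IH2.
- rewrite IH andbCA; congr (_ || (_ && (_ && _))).
  by rewrite orbC andbC [(lab e1 u == i) && _]andbC.
Qed.

Lemma edge_joinC (i j : 'I_k) (e : cwexp k V) :
  edge (CJoin i j e) = edge (CJoin j i e).
Proof.
do 2![apply: functional_extensionality => ?].
by rewrite /= [in X in _ || X]orbC.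
Qed.

Definition labels_nonadjacent (e : cwexp k V) (i j : 'I_k) : Prop :=
  forall u w, u \in verts e -> w \in verts e ->
    lab e u = i -> lab e w = j -> ~~ edge e u w.

Lemma labels_nonadjacent_sym (e : cwexp k V) (i j : 'I_k) :
  labels_nonadjacent e i j -> labels_nonadjacent e j i.
Proof. by move=> ij_nadj u w eu ew lu lw; rewrite edge_sym; apply: ij_nadj. Qed.

Lemma card_join_neighbours_lab (i j : 'I_k) (e : cwexp k V)
    (c : {ffun V -> 'I_q}) v b :
    i != j -> labels_nonadjacent e i j -> v \in verts e -> lab e v = i ->
  #|[set u in verts e | edge (CJoin i j e) v u && (c u == b)]| =
  #|[set u in verts e | edge e v u && (c u == b)]| +
  #|[set u in verts e | (c u == b) && (lab e u == j)]|.
Proof.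
move=> neq_ij ij_nadj ev labv; rewrite -card_set_or_disjoint; last first.
  move=> u eu /andP[evu _]; apply/negP=> /andP[_ /eqP labu].
  by move: (ij_nadj _ _ ev eu labv labu); rewrite evu.
apply: eq_card => u; rewrite !inE /= ev labv eqxx (negPf neq_ij) /=.
by case: (u \in verts e); rewrite //= orbF andb_orl [(c u == b) && _]andbC.
Qed.

Lemma card_join_neighbours {i j : 'I_k} {e : cwexp k V}
    (c : {ffun V -> 'I_q}) v b :
    i != j -> labels_nonadjacent e i j -> v \in verts e ->
  #|[set u in verts e | edge (CJoin i j e) v u && (c u == b)]| =
  #|[set u in verts e | edge e v u && (c u == b)]| +
  if lab e v == i then #|[set u in verts e | (c u == b) && (lab e u == j)]|
  else if lab e v == j then #|[set u in verts e | (c u == b) && (lab e u == i)]|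
  else 0.
Proof.
move=> neq_ij ij_nadj ev.
case: eqP => [labv | /eqP/negPf nlabv_i]; first exact: card_join_neighbours_lab.
case: eqP => [labv | /eqP/negPf nlabv_j].
  rewrite edge_joinC card_join_neighbours_lab // 1?eq_sym //.
  exact: labels_nonadjacent_sym.
rewrite addn0; apply: eq_card => u.
by rewrite !inE /= nlabv_i nlabv_j !andbF orbF.
Qed.

Definition join_offset (NN : nat) (C N : 'M[nat]_(k, q)) (i j : 'I_k) :
    'M[nat]_(k, q) :=
  (\matrix_(h, a) (if h == i then minn NN (N i a + C j a)
                   else if h == j then minn NN (N j a + C i a)
                   else N h a)%N)%R.

Lemma is_CN_coloring_join (L : V -> {set 'I_q})
    (check : V -> 'I_q -> ('I_q -> nat) -> bool) (NN : nat)
    (i j : 'I_k) (e : cwexp k V) (C N : 'M[nat]_(k, q)) (c : {ffun V -> 'I_q}) :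
    i != j -> labels_nonadjacent e i j ->
  is_CN_coloring L check NN (CJoin i j e) C N c =
  is_CN_coloring L check NN e C (join_offset NN C N i j) c.
Proof.
move=> neq_ij ij_nadj; rewrite /is_CN_coloring /=.
case: [forall v in verts e, c v \in L v] => //=.
case: (boolP [forall h, forall a, _]) => //= /forallP countC.
apply: eq_forallb_in => v ev.
congr (check _ _ _); apply: functional_extensionality => b.
have capC h : minn NN #|[set u in verts e | (c u == b) && (lab e u == h)]| = C h b.
  by apply/eqP; move/forallP: (countC h); apply.
rewrite (card_join_neighbours c v b neq_ij ij_nadj ev) /join_offset mxE.
case: eqP => [-> | _] /=; first by rewrite -capC minn_add_capped.
case: eqP => [-> | _] /=; first by rewrite -capC minn_add_capped.
by rewrite addn0.
Qed.

End CliqueWidthJoin.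

Theorem lemma4
  (d : Order.disp_t) (W : orderType d) (Err : W) (op : W -> W -> W) (one : W)
  (HW : is_weight_set Err op one)
  (k q : nat) (V : finType) (G : rel V)
  (L : V -> {set 'I_q}) (w : V -> 'I_q -> W)
  (check : V -> 'I_q -> ('I_q -> nat) -> bool) (NN : nat)
  (HL : forall v, L v != set0)
  (Hw : forall v a, a \in L v -> w v a != Err)
  (HNN : 1 <= NN <= #|V|)
  (Hcheck : forall v a (n : 'I_q -> nat),
      check v a n = check v a (fun b => minn NN (n b)))
  (eG : cwexp k V)
  (HeG : expresses G eG) (Hirr : irredundant eG) (Hrel : relab_target_present eG)
  (i j : 'I_k) (e : cwexp k V)
  (Hsub : subexp (CJoin i j e) eG) (Hij : i != j)
  (C N : 'M[nat]_(k, q))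
  (HC : forall h a, C h a <= NN) (HN : forall h a, N h a <= NN) :
  let Ne : 'M[nat]_(k, q) :=
    (\matrix_(h, a) (if h == i then minn NN (N i a + C j a)
                     else if h == j then minn NN (N j a + C i a)
                     else N h a)%N)%R in
  lambda Err op one L w check NN (CJoin i j e) C N
  = lambda Err op one L w check NN e C Ne.
Proof.
move=> Ne; apply: eq_bigl => c.
exact: is_CN_coloring_join Hij (Hirr i j e Hsub).
Qed.
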